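(* Let $p$ be an admissible linear order on $\mathcal A$ and let $a,b\in L_e$ with $a<b$ such that no letter of $\mathcal A$ lies strictly between $a$ and $b$. For every word $w\in\mathcal A^n$, $$\rho\bigl(d_w(w_{a,b})\bigr)\le\rho(w_{a,b}).$$
   Context: Alphabet: $\mathcal A=L_e\sqcup L_o\sqcup G$ where $L_e=\{x_1,x_2,\dots\}$, $L_o=\{y_1,y_2,\dots\}$ are discrete and $G$ is identified with an interval of $\mathbb R$. An admissible order is a linear order $p$ on $\mathcal A$ for which $G$ is an interval and whose restriction to $G$ is the usual order of reals or its reverse. Generalised RSK (row insertion) w.r.t. $p$: to insert a letter $x$ into a tableau $T$: in the first row, if $x\in L_e$ find the leftmost entry strictly greater than $x$; if $x\in L_o\cup G$ find the leftmost entry greater than or equal to $x$; if there is none, append $x$ at the end of the row and stop; otherwise $x$ replaces that entry and the replaced entry is inserted into the second row by the same rule, and so on. For $w=z_1\cdots z_n$, $R(w)$ is obtained by inserting $z_1,\dots,z_n$ successively into the empty tableau. $w_{a,b}$ is the word obtained from $w$ by deleting all letters other than $a$ and $b$. The possible transformation $d_w(w_{a,b})$ is the word formed as follows: run the insertion of $z_1,\dots,z_n$ and write down the letters $a$ and $b$ in the order in which they are bumped out of the first row; then append the letters $a$, $b$ that remain in the first row of $R(w)$ at the end (in their order in that row). For a word $u$ in the letters $a,b$, its result $\rho(u)$ is the maximum, over all suffixes $u_k u_{k+1}\cdots u_N$ of $u=u_1\cdots u_N$ (including the empty suffix), of (number of $b$'s in the suffix) minus (number of $a$'s in the suffix). 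*)

From Stdlib Require Import Reals ZArith Arith List Bool.
Import ListNotations.
Set Implicit Arguments.

(* The alphabet A = L_e ⊔ L_o ⊔ G, with L_e = {x_1,x_2,...} ≅ nat,
   L_o = {y_1,y_2,...} ≅ nat, and G a type (later {r : R | I r}). *)
Inductive letter (Gt : Type) : Type :=
| Le : nat -> letter Gt
| Lo : nat -> letter Gt
| Gl : Gt -> letter Gt.
Arguments Le {Gt} _.
Arguments Lo {Gt} _.
Arguments Gl {Gt} _.

Definition is_Le {Gt} (x : letter Gt) : bool :=
  match x with Le _ => true | _ => false end.

Definition isLeN {Gt} (k : nat) (x : letter Gt) : bool :=
  match x with Le m => Nat.eqb m k | _ => false end.

Definition is_interval (I : R -> Prop) : Prop :=
  forall x y z, I x -> I z -> (x <= y <= z)%R -> I y.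

Definition Galpha (I : R -> Prop) := {r : R | I r}.
Definition Alpha (I : R -> Prop) := letter (Galpha I).

(* p is given as a boolean strict relation "p x y" = "x < y in the order p".
   Admissible: strict linear order, G is an interval for p, and on G p is
   the usual order of reals or its reverse. *)
Definition admissible (I : R -> Prop) (p : Alpha I -> Alpha I -> bool) : Prop :=
  (forall x, p x x = false) /\
  (forall x y z, p x y = true -> p y z = true -> p x z = true) /\
  (forall x y, x <> y -> p x y = true \/ p y x = true) /\
  (forall (g h : Galpha I) (z : Alpha I),
      p (Gl g) z = true -> p z (Gl h) = true -> exists k, z = Gl k) /\
  ((forall g h : Galpha I, p (Gl g) (Gl h) = true <-> (proj1_sig g < proj1_sig h)%R) \/
   (forall g h : Galpha I, p (Gl g) (Gl h) = true <-> (proj1_sig h < proj1_sig g)%R)).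

Section RSK.
Context {Gt : Type} (p : letter Gt -> letter Gt -> bool).

(* y is a bumping candidate for inserted letter x:
   x in L_e: y > x strictly; otherwise y >= x, i.e. not (y < x). *)
Definition bumps (x y : letter Gt) : bool :=
  if is_Le x then p x y else negb (p y x).

Fixpoint row_ins (x : letter Gt) (r : list (letter Gt))
  : list (letter Gt) * option (letter Gt) :=
  match r with
  | [] => ([x], None)
  | y :: r' =>
      if bumps x y then (x :: r', Some y)
      else let (r2, o) := row_ins x r' in (y :: r2, o)
  end.

Definition tableau := list (list (letter Gt)).

Fixpoint ins (x : letter Gt) (T : tableau) : tableau :=
  match T with
  | [] => [[x]]
  | r :: T' =>
      let (r', o) := row_ins x r in
      match o with
      | None => r' :: T'
      | Some y => r' :: ins y T'
      end
  end.

Definition RSK (w : list (letter Gt)) : tableau :=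
  fold_left (fun T x => ins x T) w [].

Definition first_bump (x : letter Gt) (T : tableau) : option (letter Gt) :=
  match T with
  | [] => None
  | r :: _ => snd (row_ins x r)
  end.

Section AB.
Variables (a b : nat).  (* the letters Le a, Le b *)

Definition isab (x : letter Gt) : bool := isLeN a x || isLeN b x.

Definition restrict_ab (w : list (letter Gt)) : list (letter Gt) := filter isab w.

Fixpoint bump_trace (T : tableau) (w : list (letter Gt)) : list (letter Gt) :=
  match w with
  | [] => []
  | x :: w' =>
      match first_bump x T with
      | Some y => if isab y then [y] else []
      | None => []
      end ++ bump_trace (ins x T) w'
  end.

(* the possible transformation d_w(w_{a,b}) *)
Definition d_trans (w : list (letter Gt)) : list (letter Gt) :=
  bump_trace [] w ++ filter isab (hd [] (RSK w)).

Definition score (u : list (letter Gt)) : Z :=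
  (Z.of_nat (length (filter (isLeN b) u)) - Z.of_nat (length (filter (isLeN a) u)))%Z.

(* rho(u): max over all suffixes u_k...u_N (k = 0..N, incl. empty) of score *)
Definition rho (u : list (letter Gt)) : Z :=
  fold_right Z.max (score []) (map (fun k => score (skipn k u)) (seq 0 (S (length u)))).
End AB.
End RSK.

From Stdlib Require Import Reals ZArith Arith List Bool Lia Permutation Sorted.
Import ListNotations.

(* Write r for the first row of the tableau and Tr for the word
   of a's and b's bumped out of it so far.  Rows are weakly increasing for p,
   and since a < b, the a/b-letters of r form a block a^i b^j; the quantity
   rho (Tr ++ a^i b^j) = max(j, j - i + rho Tr) is thus a function of three
   numbers.  We show by induction along w the invariant
       rho (Tr ++ (a/b-letters of r)) <= rho (w_{a,b} read so far),
   whose final instance is the theorem.  One insertion changes the counts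
   i, j, Tr in a way controlled by the adjacency of a and b: inserting a
   bumps b iff the row contains b, inserting b never bumps an a/b-letter,
   and another letter can only bump b out of a row without a's.  Given
   these facts the inductive step is pure arithmetic (potential_step). *)

Section Scores.
Context {Gt : Type}.
Variables a b : nat.

Definition cnt (n : nat) (u : list (letter Gt)) : nat := length (filter (isLeN n) u).

Lemma cnt_app n u v : cnt n (u ++ v) = cnt n u + cnt n v.
Proof. unfold cnt. now rewrite filter_app, length_app. Qed.

Lemma cnt_perm n u v : Permutation u v -> cnt n u = cnt n v.
Proof.
  unfold cnt. induction 1; simpl; auto.
  - destruct (isLeN n x); simpl; auto.
  - destruct (isLeN n x), (isLeN n y); simpl; auto.
  - congruence.
Qed.

Lemma isLeN_eq n (y : letter Gt) : isLeN n y = true -> y = Le n.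
Proof. destruct y; simpl; try discriminate. now intros ->%Nat.eqb_eq. Qed.

Lemma cnt_pos_iff n (r : list (letter Gt)) : cnt n r > 0 <-> In (Le n) r.
Proof.
  unfold cnt. induction r as [|z r IH]; simpl; [split; [lia|intros []]|].
  destruct (isLeN n z) eqn:E; simpl.
  - split; [left; now apply isLeN_eq | lia].
  - rewrite IH. split; [auto|]. intros [Hz|H]; [|exact H].
    subst z. simpl in E. now rewrite Nat.eqb_refl in E.
Qed.

Lemma cnt_singleton n (x : letter Gt) : cnt n [x] = if isLeN n x then 1 else 0.
Proof. unfold cnt; simpl. now destruct (isLeN n x). Qed.

Definition ab_part (u : list (letter Gt)) : list (letter Gt) :=
  repeat (Le a) (cnt a u) ++ repeat (Le b) (cnt b u).

Lemma score_app (u v : list (letter Gt)) : score a b (u ++ v) = (score a b u + score a b v)%Z.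
Proof. unfold score. rewrite !filter_app, !length_app. lia. Qed.

Lemma rho_nil : rho a b ([] : list (letter Gt)) = 0%Z.
Proof. reflexivity. Qed.

Lemma rho_cons (x : letter Gt) u : rho a b (x :: u) = Z.max (score a b (x :: u)) (rho a b u).
Proof.
  unfold rho. change (length (x :: u)) with (S (length u)).
  change (seq 0 (S (S (length u)))) with (0 :: seq 1 (S (length u))).
  rewrite <- (seq_shift (S (length u)) 0). cbn -[seq score map]. cbn [map].
  now rewrite map_map.
Qed.

Lemma rho_nonneg (u : list (letter Gt)) : (0 <= rho a b u)%Z.
Proof. induction u; [now rewrite rho_nil | rewrite rho_cons; lia]. Qed.

Lemma score_le_rho (u : list (letter Gt)) : (score a b u <= rho a b u)%Z.
Proof. destruct u; [reflexivity | rewrite rho_cons; lia]. Qed.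

(* A suffix of u ++ v is a suffix of v, or a suffix of u followed by v. *)
Lemma rho_app (u v : list (letter Gt)) :
  rho a b (u ++ v) = Z.max (rho a b v) (score a b v + rho a b u)%Z.
Proof.
  induction u as [|x u IH]; simpl.
  - rewrite rho_nil. pose proof (score_le_rho v). lia.
  - rewrite !rho_cons, IH. change (x :: u ++ v) with ([x] ++ (u ++ v)).
    change (x :: u) with ([x] ++ u). rewrite !score_app. lia.
Qed.

Lemma score_cnt (u : list (letter Gt)) :
  score a b u = (Z.of_nat (cnt b u) - Z.of_nat (cnt a u))%Z.
Proof. reflexivity. Qed.

Lemma cnt_repeat m n i : cnt m (repeat (Le n) i : list (letter Gt)) = if Nat.eqb n m then i else 0.
Proof.
  unfold cnt. induction i as [|i IH]; simpl; [now destruct (n =? m)|].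
  destruct (n =? m); simpl; lia.
Qed.

Lemma score_repeat n i : score a b (repeat (Le n) i : list (letter Gt)) =
  (Z.of_nat (if Nat.eqb n b then i else 0) - Z.of_nat (if Nat.eqb n a then i else 0))%Z.
Proof. now rewrite score_cnt, !cnt_repeat. Qed.

Hypothesis a_ne_b : a <> b.

Lemma cnt_ab_le u : cnt a u + cnt b u <= length u.
Proof.
  unfold cnt. induction u as [|z u IH]; simpl; [lia|].
  destruct z as [n| |]; simpl; try lia.
  destruct (Nat.eqb_spec n a), (Nat.eqb_spec n b); simpl; lia.
Qed.

Lemma rho_repeat_a i : rho a b (repeat (Le a) i : list (letter Gt)) = 0%Z.
Proof.
  induction i as [|i IH]; [reflexivity|]. cbn [repeat]. rewrite rho_cons, IH.
  change (Le a :: repeat (Le a) i) with (repeat (Le a) (S i) : list (letter Gt)).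
  rewrite score_repeat, Nat.eqb_refl. destruct (Nat.eqb_spec a b); [contradiction|lia].
Qed.

Lemma rho_repeat_b j : rho a b (repeat (Le b) j : list (letter Gt)) = Z.of_nat j.
Proof.
  induction j as [|j IH]; [reflexivity|]. cbn [repeat]. rewrite rho_cons, IH.
  change (Le b :: repeat (Le b) j) with (repeat (Le b) (S j) : list (letter Gt)).
  rewrite score_repeat, Nat.eqb_refl. destruct (Nat.eqb_spec b a); [subst; contradiction|lia].
Qed.

Lemma rho_block (U : list (letter Gt)) i j :
  rho a b (U ++ repeat (Le a) i ++ repeat (Le b) j) =
  Z.max (Z.of_nat j) (Z.of_nat j - Z.of_nat i + rho a b U).
Proof.
  rewrite !rho_app, score_app, !score_repeat, rho_repeat_a, rho_repeat_b, !Nat.eqb_refl.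
  destruct (Nat.eqb_spec a b), (Nat.eqb_spec b a); try (subst; contradiction). lia.
Qed.
End Scores.

(* The numerical heart of one insertion step.  Before the step the first row
   holds a^i b^j and the bumped word has potential rT; the inserted letter
   contributes (ix, jx) a's and b's, the bumped letter (it, jt), and the new
   row holds a^i' b^j'.  The constraints are conservation of letters and the
   three bumping rules for adjacent a < b. *)
Lemma potential_step (i j i' j' ix jx it jt : nat) (rT rW : Z) :
  (0 <= rT)%Z -> ix + i = i' + it -> jx + j = j' + jt -> ix + jx <= 1 -> it + jt <= 1 ->
  (ix = 1 -> it = 0 /\ jt = Nat.min 1 j) ->
  (jx = 1 -> it = 0 /\ jt = 0) ->
  (ix = 0 -> jx = 0 -> jt = 1 -> i = 0) ->
  (Z.max (Z.of_nat j) (Z.of_nat j - Z.of_nat i + rT) <= rW)%Z ->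
  (Z.max (Z.of_nat j') (Z.of_nat j' - Z.of_nat i' +
     Z.max (Z.of_nat jt) (Z.of_nat jt - Z.of_nat it + rT))
   <= Z.max (Z.of_nat jx) (Z.of_nat jx - Z.of_nat ix + rW))%Z.
Proof. lia. Qed.

Section Rows.
Context {Gt : Type} (p : letter Gt -> letter Gt -> bool).
Hypothesis p_irrefl : forall x, p x x = false.
Hypothesis p_trans : forall x y z, p x y = true -> p y z = true -> p x z = true.
Hypothesis p_total : forall x y, x <> y -> p x y = true \/ p y x = true.

Definition lep (x y : letter Gt) : Prop := p y x = false.

Lemma p_asym x y : p x y = true -> p y x = false.
Proof.
  intros H. destruct (p y x) eqn:E; [|reflexivity].
  rewrite <- (p_irrefl x). symmetry. exact (p_trans _ _ _ H E).
Qed.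

Lemma lep_trans x y z : lep x y -> lep y z -> lep x z.
Proof.
  unfold lep. intros Hxy Hyz. destruct (p z x) eqn:Ezx; [exfalso|reflexivity].
  destruct (p x y) eqn:Exy; [rewrite (p_trans _ _ _ Ezx Exy) in Hyz; discriminate|].
  assert (Hne : x <> y) by (intros ->; congruence).
  destruct (p_total _ _ Hne); congruence.
Qed.

Lemma eq_Le_of_incomparable (z : letter Gt) n :
  p z (Le n) = false -> p (Le n) z = false -> z = Le n.
Proof.
  intros H1 H2.
  assert (Hne : z <> Le n -> False) by (intros Hne; destruct (p_total _ _ Hne); congruence).
  destruct z as [m|m|g]; try (exfalso; apply Hne; discriminate).
  destruct (Nat.eq_dec m n) as [->|Hmn]; [reflexivity|].
  exfalso; apply Hne; congruence.
Qed.

Lemma bumps_lep x y : bumps p x y = true -> lep x y.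
Proof.
  unfold bumps, lep. destruct (is_Le x); intros H; [now apply p_asym|].
  now destruct (p y x).
Qed.

Lemma not_bumps_lep x y : bumps p x y = false -> lep y x.
Proof.
  unfold bumps, lep. destruct (is_Le x); intros H; [exact H|].
  destruct (p y x) eqn:E; [now apply p_asym | discriminate].
Qed.

Definition optlist (o : option (letter Gt)) : list (letter Gt) :=
  match o with Some y => [y] | None => [] end.

Lemma row_ins_perm x r :
  Permutation (x :: r) (fst (row_ins p x r) ++ optlist (snd (row_ins p x r))).
Proof.
  induction r as [|z r IH]; simpl; [auto|].
  destruct (bumps p x z); simpl; [constructor; apply Permutation_cons_append|].
  destruct (row_ins p x r) as [r2 o]; simpl in *.
  eapply perm_trans; [apply perm_swap|]. now constructor.
Qed.

Lemma row_ins_bumped {x r r' y} :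
  row_ins p x r = (r', Some y) -> In y r /\ bumps p x y = true.
Proof.
  revert r'. induction r as [|z r IH]; simpl; intros r' H; [discriminate|].
  destruct (bumps p x z) eqn:Eb; [injection H as <- <-; auto|].
  destruct (row_ins p x r) as [r2 o]. injection H as <- ->.
  destruct (IH r2 eq_refl); auto.
Qed.

Lemma row_ins_sorted x r : StronglySorted lep r -> StronglySorted lep (fst (row_ins p x r)).
Proof.
  induction r as [|z r IH]; simpl; intros Hs.
  - repeat constructor.
  - inversion Hs as [|? ? Hr Hz]; subst. rewrite Forall_forall in Hz.
    destruct (bumps p x z) eqn:Eb; simpl.
    + constructor; [exact Hr|]. apply Forall_forall. intros v Hv.
      apply lep_trans with z; [now apply bumps_lep | auto].
    + pose proof (row_ins_perm x r) as HP.
      destruct (row_ins p x r) as [r2 o]; simpl in *.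
      constructor; [auto|]. apply Forall_forall. intros v Hv.
      assert (Hv' : In v (x :: r))
        by (apply (Permutation_in _ (Permutation_sym HP)); apply in_or_app; auto).
      destruct Hv' as [<-|Hv']; [now apply not_bumps_lep | auto].
Qed.

Lemma hd_ins x (T : tableau (Gt:=Gt)) : hd [] (ins p x T) = fst (row_ins p x (hd [] T)).
Proof.
  destruct T as [|r T]; simpl; [reflexivity|].
  now destruct (row_ins p x r) as [r' [y|]].
Qed.

Lemma first_bump_hd x (T : tableau (Gt:=Gt)) : first_bump p x T = snd (row_ins p x (hd [] T)).
Proof. now destruct T. Qed.
End Rows.

Section Adjacent.
Context {Gt : Type} (p : letter Gt -> letter Gt -> bool).
Hypothesis p_irrefl : forall x, p x x = false.
Hypothesis p_trans : forall x y z, p x y = true -> p y z = true -> p x z = true.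
Hypothesis p_total : forall x y, x <> y -> p x y = true \/ p y x = true.
Variables a b : nat.
Hypothesis Hab : p (Le a) (Le b) = true.
Hypothesis Hadj : forall z, ~ (p (Le a) z = true /\ p z (Le b) = true).

Notation sorted := (StronglySorted (lep p)).
Notation bumped x r := (optlist (snd (row_ins p x r))).

Lemma a_ne_b : a <> b.
Proof. intros ->. now rewrite p_irrefl in Hab. Qed.

Lemma cnt_a_above_b r : Forall (lep p (Le b)) r -> cnt a r = 0.
Proof.
  intros H. destruct (cnt a r) eqn:E; [reflexivity|].
  rewrite Forall_forall in H. specialize (H _ (proj1 (cnt_pos_iff a r) ltac:(lia))).
  unfold lep in H. congruence.
Qed.

Lemma filter_sorted r : sorted r -> filter (isab a b) r = ab_part a b r.
Proof.
  unfold ab_part. induction 1 as [|z r Hr IH Hz]; [reflexivity|].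
  unfold cnt in *. simpl. destruct z as [n|n|g]; simpl; auto.
  change (isab a b (Le n)) with ((n =? a) || (n =? b)).
  destruct (Nat.eqb_spec n b) as [->|Hnb].
  - destruct (Nat.eqb_spec b a); [exfalso; now apply a_ne_b|]. simpl.
    pose proof (cnt_a_above_b _ Hz) as Ha. unfold cnt in Ha. rewrite IH, Ha. reflexivity.
  - rewrite orb_false_r. destruct (Nat.eqb_spec n a) as [->|]; simpl; now rewrite IH.
Qed.

Lemma sorted_optlist o : sorted (optlist o).
Proof. destruct o; repeat constructor. Qed.

(* Inserting a into a row containing b bumps b: by adjacency, the first
   letter greater than a is b. *)
Lemma insert_a_bumps_b r : sorted r -> In (Le b) r -> snd (row_ins p (Le a) r) = Some (Le b).
Proof.
  induction 1 as [|z r Hr IH Hz]; [intros []|]. intros Hin. simpl.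
  unfold bumps at 1. simpl. rewrite Forall_forall in Hz.
  destruct (p (Le a) z) eqn:E.
  - cbn [snd]. f_equal. destruct Hin as [<-|Hin]; [reflexivity|].
    apply (eq_Le_of_incomparable p p_total).
    + destruct (p z (Le b)) eqn:E'; [exfalso; now apply (Hadj z)|reflexivity].
    + exact (Hz _ Hin).
  - destruct Hin as [Hzb|Hin]; [subst z; congruence|].
    destruct (row_ins p (Le a) r) as [r2 o]. apply IH, Hin.
Qed.

(* A letter bumped by a is not a (the comparison is strict), and it is b
   exactly when the row contains b. *)
Lemma insert_a_counts r : sorted r ->
  cnt a (bumped (Le a) r) = 0 /\ cnt b (bumped (Le a) r) = Nat.min 1 (cnt b r).
Proof.
  intros Hs. destruct (cnt b r) as [|j] eqn:Ej.
  - destruct (row_ins p (Le a) r) as [r' [y|]] eqn:E; [|auto].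
    destruct (row_ins_bumped p E) as [Hy Hb]. unfold bumps in Hb; simpl in Hb.
    unfold cnt; simpl. destruct (isLeN a y) eqn:Ea.
    + rewrite (isLeN_eq a y Ea), p_irrefl in Hb; discriminate.
    + destruct (isLeN b y) eqn:Eb; [|auto].
      rewrite (isLeN_eq b y Eb), <- cnt_pos_iff in Hy. lia.
  - rewrite (insert_a_bumps_b _ Hs (proj1 (cnt_pos_iff b r) ltac:(lia))). simpl.
    unfold cnt; simpl. rewrite Nat.eqb_refl.
    destruct (Nat.eqb_spec b a); [exfalso; now apply a_ne_b | auto].
Qed.

(* Inserting b bumps a letter strictly greater than b, hence neither a nor b. *)
Lemma insert_b_counts r : cnt a (bumped (Le b) r) = 0 /\ cnt b (bumped (Le b) r) = 0.
Proof.
  destruct (row_ins p (Le b) r) as [r' [y|]] eqn:E; [|auto].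
  destruct (row_ins_bumped p E) as [_ Hb]. unfold bumps in Hb; simpl in Hb.
  unfold cnt; simpl. destruct (isLeN a y) eqn:Ea.
  - rewrite (isLeN_eq a y Ea), (p_asym p p_irrefl p_trans _ _ Hab) in Hb; discriminate.
  - destruct (isLeN b y) eqn:Eb; [|auto].
    rewrite (isLeN_eq b y Eb), p_irrefl in Hb; discriminate.
Qed.

(* A letter other than a, b cannot bump b while passing over a: it would
   lie strictly between a and b. *)
Lemma bumps_between x : isab a b x = false ->
  bumps p x (Le a) = false -> bumps p x (Le b) = true -> False.
Proof.
  intros Hx Ha Hb. apply (Hadj x).
  unfold isab in Hx. apply orb_false_elim in Hx as [Hxa Hxb].
  assert (Hna : x <> Le a) by (intros ->; simpl in Hxa; now rewrite Nat.eqb_refl in Hxa).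
  assert (Hnb : x <> Le b) by (intros ->; simpl in Hxb; now rewrite Nat.eqb_refl in Hxb).
  unfold bumps in *. destruct (is_Le x).
  - split; [destruct (p_total _ _ Hna)|]; congruence.
  - apply negb_false_iff in Ha. apply negb_true_iff in Hb.
    split; [exact Ha|]. destruct (p_total _ _ Hnb); congruence.
Qed.

Lemma insert_other_bumps_b x r : isab a b x = false -> sorted r ->
  cnt b (bumped x r) = 1 -> cnt a r = 0.
Proof.
  intros Hx. induction 1 as [|z r Hr IH Hz]; [discriminate|]. intros Hbump.
  simpl in Hbump. destruct (bumps p x z) eqn:Eb.
  - unfold cnt in Hbump; simpl in Hbump.
    destruct (isLeN b z) eqn:Ez; [|discriminate].
    rewrite (isLeN_eq b z Ez) in Hz |- *. unfold cnt; simpl.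
    destruct (Nat.eqb_spec b a); [exfalso; now apply a_ne_b|].
    exact (cnt_a_above_b _ Hz).
  - destruct (row_ins p x r) as [r2 o] eqn:E. simpl in Hbump.
    change (cnt a (z :: r)) with (cnt a ([z] ++ r)). rewrite cnt_app, (IH Hbump).
    destruct o as [y|]; [|discriminate].
    destruct (row_ins_bumped p E) as [_ Hy].
    unfold cnt in Hbump; simpl in Hbump. destruct (isLeN b y) eqn:Ey; [|discriminate].
    rewrite (isLeN_eq b y Ey) in Hy. unfold cnt; simpl.
    destruct (isLeN a z) eqn:Ez; [|reflexivity].
    rewrite (isLeN_eq a z Ez) in Eb. exfalso. exact (bumps_between _ Hx Eb Hy).
Qed.
Lemma insert_step x r Tr W : sorted r ->
  (rho a b (Tr ++ filter (isab a b) r) <= rho a b W)%Z ->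
  (rho a b ((Tr ++ filter (isab a b) (bumped x r)) ++ filter (isab a b) (fst (row_ins p x r)))
   <= rho a b (W ++ filter (isab a b) [x]))%Z.
Proof.
  intros Hs Hinv.
  assert (Hs' : sorted (fst (row_ins p x r))) by now apply row_ins_sorted.
  assert (Hx : sorted [x]) by repeat constructor.
  assert (Hcount : forall n, cnt n [x] + cnt n r =
            cnt n (fst (row_ins p x r)) + cnt n (bumped x r)).
  { intros n. rewrite <- !cnt_app. apply cnt_perm, row_ins_perm. }
  assert (Hlen : length (bumped x r) <= 1) by (destruct (snd (row_ins p x r)); simpl; lia).
  assert (Hxa : cnt a [x] = 1 -> cnt a (bumped x r) = 0 /\
                                 cnt b (bumped x r) = Nat.min 1 (cnt b r)).
  { rewrite cnt_singleton. destruct (isLeN a x) eqn:E; [|discriminate].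
    rewrite (isLeN_eq a x E). auto using insert_a_counts. }
  assert (Hxb : cnt b [x] = 1 -> cnt a (bumped x r) = 0 /\ cnt b (bumped x r) = 0).
  { rewrite cnt_singleton. destruct (isLeN b x) eqn:E; [|discriminate].
    rewrite (isLeN_eq b x E). auto using insert_b_counts. }
  assert (Hxo : cnt a [x] = 0 -> cnt b [x] = 0 -> cnt b (bumped x r) = 1 -> cnt a r = 0).
  { rewrite !cnt_singleton. intros Ha Hb. apply insert_other_bumps_b; [|exact Hs].
    unfold isab. destruct (isLeN a x), (isLeN b x); easy. }
  pose proof (cnt_ab_le a b a_ne_b [x]). pose proof (cnt_ab_le a b a_ne_b (bumped x r)).
  pose proof (Hcount a). pose proof (Hcount b).
  rewrite (filter_sorted _ Hs) in Hinv.
  rewrite !filter_sorted by auto using sorted_optlist. unfold ab_part in *.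
  rewrite !(rho_block a b a_ne_b) in *.
  apply potential_step with (i := cnt a r) (j := cnt b r); try assumption;
    [apply rho_nonneg | simpl in *; lia].
Qed.

Lemma trace_invariant v : forall (T : tableau (Gt:=Gt)) Tr W, sorted (hd [] T) ->
  (rho a b (Tr ++ filter (isab a b) (hd [] T)) <= rho a b W)%Z ->
  (rho a b (Tr ++ bump_trace p a b T v ++
            filter (isab a b) (hd [] (fold_left (fun T x => ins p x T) v T)))
   <= rho a b (W ++ filter (isab a b) v))%Z.
Proof.
  induction v as [|x v IH]; intros T Tr W Hs Hinv.
  - cbn [bump_trace fold_left filter]. now rewrite !app_nil_r.
  - cbn [bump_trace fold_left].
    replace (match first_bump p x T with Some y => if isab a b y then [y] else [] | None => [] end)
      with (filter (isab a b) (bumped x (hd [] T)))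
      by (rewrite first_bump_hd; now destruct (snd (row_ins p x (hd [] T)))).
    change (x :: v) with ([x] ++ v). rewrite filter_app.
    rewrite <- !app_assoc, (app_assoc Tr), (app_assoc W).
    apply IH; rewrite hd_ins; [now apply row_ins_sorted | now apply insert_step].
Qed.
End Adjacent.

Theorem lemma5 (I : R -> Prop) (HI : is_interval I)
  (p : Alpha I -> Alpha I -> bool) (Hp : admissible p)
  (a b : nat)
  (Hab : p (Le a) (Le b) = true)
  (Hadj : forall z : Alpha I, ~ (p (Le a) z = true /\ p z (Le b) = true))
  (w : list (Alpha I)) :
  (rho a b (d_trans p a b w) <= rho a b (restrict_ab a b w))%Z.
Proof.
  destruct Hp as [Hirr [Htrans [Htotal _]]].
  exact (trace_invariant p Hirr Htrans Htotal a b Hab Hadj w [] [] []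
           (SSorted_nil _) (Z.le_refl _)).
Qed.
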